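(* Let $\mathcal{T}\in\mathbb{K}^{R\times R\times K}$ be slice mix invertible, and let $\{(\mathscr{L}_j,\mathbf{x}_j)\}_{j=1}^\ell$ be JGE pairs of $\mathcal{T}$ with $\mathscr{L}_1,\dots,\mathscr{L}_\ell$ pairwise distinct. Then $\{\mathbf{x}_j\}_{j=1}^\ell$ is linearly independent. Consequently, if $\mathcal{T}$ is simple and each of its JGE values has geometric multiplicity at least one, then the JGE vectors of $\mathcal{T}$ contain a basis of $\mathbb{K}^R$.
   Context: $\mathbb{K}$ denotes $\mathbb{R}$ or $\mathbb{C}$. For $\mathcal{T}\in\mathbb{K}^{R\times R\times K}$ with slices $\mathbf{T}_k=\mathcal{T}(:,:,k)$: slice mix invertible means some linear combination of the $\mathbf{T}_k$ is invertible. A nonzero $\mathbf{x}$ is a JGE vector if there are $\boldsymbol{\lambda}\in\mathbb{K}^K$ and nonzero $\mathbf{y}\in\mathbb{K}^R$ with $\mathbf{T}_\ell\mathbf{x}=\lambda_\ell\mathbf{y}$ for all $\ell$; then $\mathrm{span}(\boldsymbol{\lambda})$ is a JGE value and $(\mathrm{span}(\boldsymbol{\lambda}),\mathbf{x})$ a JGE pair. $p_{\mathcal{T}}(\boldsymbol{\gamma})=\det(\sum_k\gamma_k\mathbf{T}_k)$; the algebraic multiplicity of $\mathrm{span}(\boldsymbol{\lambda})$ is the largest $m$ with $(\sum_k\lambda_k\gamma_k)^m\mid p_{\mathcal{T}}$ (so JGE values are understood to include such $\mathrm{span}(\boldsymbol\lambda)$ with positive algebraic multiplicity); the geometric multiplicity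 is the dimension of the span of JGE vectors paired with it. $\mathcal{T}$ is simple if it is slice mix invertible and $p_{\mathcal{T}}$ is a product of $R$ pairwise non-proportional linear forms. *)

From HB Require Import structures.
From mathcomp Require Import all_boot all_order all_algebra.
From mathcomp Require Import mpoly.
Set Implicit Arguments. Unset Strict Implicit. Unset Printing Implicit Defensive.
Import Order.TTheory GRing.Theory Num.Theory.
Local Open Scope ring_scope.

(* A tensor T in F^{R x R x K} is given by its K frontal slices T k : 'M_R.
   Vectors of F^R are column vectors 'cV_R; coefficient vectors lambda in F^K
   are row vectors 'rV_K, and span(lambda) is the row space of lambda. *)

Section JGE.
Variables (F : numFieldType) (R K : nat).
Implicit Types (T : 'I_K -> 'M[F]_R).

Definition slice_mix_invertible T : Prop :=
  exists g : 'I_K -> F, (\sum_k g k *: T k) \in unitmx.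

Definition JGE_pair T (L : 'rV[F]_K) (x : 'cV[F]_R) : Prop :=
  x != 0 /\
  exists (lam : 'rV[F]_K) (y : 'cV[F]_R),
    (lam == L)%MS /\ y != 0 /\ forall l : 'I_K, T l *m x = lam 0 l *: y.

Definition JGE_vector T (x : 'cV[F]_R) : Prop := exists L, JGE_pair T L x.

Definition linform (lam : 'rV[F]_K) : {mpoly F[K]} :=
  \sum_(k < K) (lam 0 k)%:MP * 'X_k.

Definition pT T : {mpoly F[K]} :=
  \det (\matrix_(i < R, j < R) \sum_(k < K) (T k i j)%:MP * 'X_k).

Definition alg_mult_pos T (lam : 'rV[F]_K) : Prop :=
  exists q : {mpoly F[K]}, pT T = linform lam * q.

Definition JGE_value T (L : 'rV[F]_K) : Prop :=
  (exists x, JGE_pair T L x) \/ alg_mult_pos T L.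

(* geometric multiplicity >= 1: the span of JGE vectors paired with L
   is nonzero, i.e. some JGE vector is paired with L *)
Definition geom_mult_ge1 T (L : 'rV[F]_K) : Prop :=
  exists x, JGE_pair T L x.

Definition simple_tensor T : Prop :=
  slice_mix_invertible T /\
  exists c : 'I_R -> 'rV[F]_K,
    (forall i, c i != 0) /\
    (forall i j, i != j -> ~~ (c i == c j)%MS) /\
    pT T = \prod_(i < R) linform (c i).

End JGE.

From HB Require Import structures.
From mathcomp Require Import all_boot all_order all_algebra.
From mathcomp Require Import mpoly.
Set Implicit Arguments. Unset Strict Implicit. Unset Printing Implicit Defensive.
Import Order.TTheory GRing.Theory Num.Theory.
Local Open Scope ring_scope.

(* If M = \sum_k g_k T_k is invertible and (span lam, x) is a JGE pair with
   T_k x = lam_k y, then M x = c y with c = \sum_k g_k lam_k nonzero, so x is a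
   common eigenvector of the matrices M^-1 T_k with eigenvalue row lam / c,
   which spans the same line as lam. Distinct JGE values thus give distinct
   eigenvalue rows, and common eigenvectors with distinct eigenvalue rows are
   independent: applying M^-1 T_k - mu_k(x_0) kills the x_0 term of a relation.
   For a simple tensor, each of the R linear factors of p_T is a JGE value,
   hence carries a JGE vector, and these R vectors are independent. *)

Section JointEigenvectors.
Variables (F : fieldType) (n K : nat) (A : 'I_K -> 'M[F]_n).

Lemma joint_eigenvectors_indep l (x : 'I_l -> 'cV[F]_n) (mu : 'I_l -> 'rV[F]_K) :
    (forall j, x j != 0) -> (forall j k, A k *m x j = mu j 0 k *: x j) ->
    injective mu ->
  forall a : 'I_l -> F, \sum_j a j *: x j = 0 -> forall j, a j = 0.
Proof.
elim: l x mu => [|l IHl] x mu x_nz x_eig mu_inj a; first by move=> _ [].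
rewrite big_ord_recl => rel.
have killed k : \sum_i (a (lift ord0 i) * (mu (lift ord0 i) 0 k - mu ord0 0 k))
                        *: x (lift ord0 i) = 0.
  have := congr1 (mulmx (A k - (mu ord0 0 k)%:M)) rel.
  rewrite mulmx0 mulmxDr -scalemxAr mulmxBl mul_scalar_mx x_eig subrr.
  rewrite scaler0 add0r mulmx_sumr => shifted; rewrite -[RHS]shifted.
  apply: eq_bigr => i _.
  by rewrite -scalemxAr mulmxBl mul_scalar_mx x_eig -scalerBl scalerA.
have a_lift i : a (lift ord0 i) = 0.
  apply/eqP/negPn/negP => a_nz; apply: (negP (neq_lift ord0 i)).
  apply/eqP/(mu_inj)/rowP => k.
  have := IHl _ _ (fun j => x_nz (lift ord0 j)) (fun j => x_eig (lift ord0 j))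
    (inj_comp mu_inj (@lift_inj _ ord0)) _ (killed k) i.
  by move/eqP; rewrite mulf_eq0 (negPf a_nz) subr_eq0 => /eqP ->.
have a0 : a ord0 = 0.
  move: rel; rewrite big1 ?addr0 => [/eqP|i _]; last by rewrite a_lift scale0r.
  by rewrite scaler_eq0 (negPf (x_nz ord0)) orbF => /eqP.
by move=> j; case: (unliftP ord0 j) => [i ->|->].
Qed.

Lemma joint_eigenvectors_row_free l (x : 'I_l -> 'cV[F]_n) (mu : 'I_l -> 'rV[F]_K) :
    (forall j, x j != 0) -> (forall j k, A k *m x j = mu j 0 k *: x j) ->
    injective mu ->
  row_free (\matrix_(j < l) (x j)^T).
Proof.
move=> x_nz x_eig mu_inj; apply: inj_row_free => v vX0; apply/rowP => j.
rewrite mxE; apply: (joint_eigenvectors_indep x_nz x_eig mu_inj) j.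
apply: trmx_inj; rewrite trmx0 -[RHS]vX0 mulmx_sum_row linear_sum.
by apply: eq_bigr => j _; rewrite linearZ /= rowK.
Qed.

End JointEigenvectors.

Section JGEPairs.
Variables (F : numFieldType) (R K : nat) (T : 'I_K -> 'M[F]_R) (g : 'I_K -> F).
Local Notation M := (\sum_k g k *: T k).
Hypothesis M_unit : M \in unitmx.

Lemma JGE_pair_joint_eigen L x : JGE_pair T L x ->
  exists2 mu : 'rV[F]_K, (mu == L)%MS & forall k, invmx M *m T k *m x = mu 0 k *: x.
Proof.
case=> x_nz [lam [y [lamL [_ Tx]]]].
pose c := \sum_k g k * lam 0 k.
have Mx : M *m x = c *: y.
  rewrite mulmx_suml scaler_suml; apply: eq_bigr => k _.
  by rewrite -scalemxAl Tx scalerA.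
have c_nz : c != 0.
  by apply: contraNneq x_nz => c0; rewrite -(mulKmx M_unit x) Mx c0 scale0r mulmx0.
have invMy : invmx M *m y = c^-1 *: x.
  by rewrite -(mulKmx M_unit x) Mx -scalemxAr scalerA mulVf // scale1r.
exists (c^-1 *: lam).
  by apply/eqmxP/(eqmx_trans (eqmx_scale _ _) (eqmxP lamL)); rewrite invr_eq0.
by move=> k; rewrite -mulmxA Tx -scalemxAr invMy scalerA [in RHS]mxE mulrC.
Qed.

Lemma JGE_pairs_row_free l (L : 'I_l -> 'rV[F]_K) (x : 'I_l -> 'cV[F]_R) :
    (forall j, JGE_pair T (L j) (x j)) -> (forall i j, i != j -> ~~ (L i == L j)%MS) ->
  row_free (\matrix_(j < l) (x j)^T).
Proof.
move=> JGE_x L_dist.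
have [mu muL mu_eig] := fin_all_exists2 (fun j => JGE_pair_joint_eigen (JGE_x j)).
have x_nz j : x j != 0 by case: (JGE_x j).
apply: (joint_eigenvectors_row_free x_nz mu_eig) => i j mu_ij.
have [->//|ij] := eqVneq i j; case/negP: (L_dist i j ij); apply/eqmxP.
apply: eqmx_trans (eqmx_sym (eqmxP (muL i))) _.
by rewrite mu_ij; apply/eqmxP.
Qed.

End JGEPairs.

Lemma linform_factor_alg_mult_pos (F : numFieldType) (R K : nat)
    (T : 'I_K -> 'M[F]_R) (c : 'I_R -> 'rV[F]_K) :
  pT T = \prod_(i < R) linform (c i) -> forall i, alg_mult_pos T (c i).
Proof.
move=> pT_prod i; exists (\prod_(j < R | j != i) linform (c j)).
by rewrite pT_prod (bigD1 i).
Qed.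

Theorem lemma3p2 (F : numFieldType) (R K : nat) (T : 'I_K -> 'M[F]_R) :
  slice_mix_invertible T ->
  (forall (l : nat) (L : 'I_l -> 'rV[F]_K) (x : 'I_l -> 'cV[F]_R),
      (forall j, JGE_pair T (L j) (x j)) ->
      (forall i j, i != j -> ~~ (L i == L j)%MS) ->
      row_free (\matrix_(j < l) (x j)^T)) /\
  (simple_tensor T ->
   (forall L : 'rV[F]_K, JGE_value T L -> geom_mult_ge1 T L) ->
   exists X : 'I_R -> 'cV[F]_R,
     (forall i, JGE_vector T (X i)) /\
     row_free (\matrix_(i < R) (X i)^T) /\ row_full (\matrix_(i < R) (X i)^T)).
Proof.
move=> [g M_unit]; have free := JGE_pairs_row_free M_unit.
split=> [//|[_ [c [_ [c_dist pT_prod]]]] geom].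
have /fin_all_exists[X JGE_X] i : exists X, JGE_pair T (c i) X.
  by apply: geom; right; apply: linform_factor_alg_mult_pos.
have X_free := free _ _ X JGE_X c_dist.
exists X; split; first by move=> i; exists (c i).
by rewrite row_full_unit -row_free_unit.
Qed.
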